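(* Let $K_n$ be the complete graph on $n$ vertices. Then $$\liminf_{p\to\infty}\|M_{K_n}\|_p^p\geq \sup_{\alpha>1,\ k\in\{1,\dots,n\}}\frac{k\alpha^{n/k}+\alpha(n-k)}{k\alpha^{n/k}+n-k}.$$
   Context: For a finite connected graph $G=(V,E)$ with graph distance $d_G$ and $f:V\to\mathbb{R}$, $M_Gf(v)=\sup_{r\geq 0}\frac{1}{|B(v,r)|}\sum_{u\in B(v,r)}|f(u)|$, where $B(v,r)=\{u\in V: d_G(u,v)\le r\}$. For $g:V\to\mathbb{R}$, $\|g\|_p=(\sum_{v\in V}|g(v)|^p)^{1/p}$ and $\|M_G\|_p=\sup_{f\neq 0}\|M_Gf\|_p/\|f\|_p$. *)

From HB Require Import structures.
From mathcomp Require Import all_boot all_order all_algebra.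
From mathcomp Require Import all_classical all_reals all_analysis.
Set Implicit Arguments. Unset Strict Implicit. Unset Printing Implicit Defensive.
Import Order.TTheory GRing.Theory Num.Theory.
Local Open Scope ring_scope.

Section GraphMax.
Variables (R : realType) (T : finType) (e : rel T).

(* closed ball B(v,r) = {u | d_G(u,v) <= r}: u is reachable from v by an
   e-path with at most r edges *)
Definition gball (v : T) (r : R) : {set T} :=
  [set u : T | `[< exists p : seq T,
       [/\ path e v p, last v p = u & ((size p)%:R <= r)] >]].

Definition maxop (f : T -> R) (v : T) : R :=
  sup [set y : R | exists2 r : R, 0 <= r &
         y = (#|gball v r|%:R)^-1 * \sum_(u in gball v r) `|f u|].

Definition lpnorm (p : R) (g : T -> R) : R :=
  powR (\sum_(v : T) powR `|g v| p) p^-1.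

Definition maxop_norm (p : R) : R :=
  sup [set y : R | exists2 f : T -> R, f <> (fun _ => 0) &
         y = lpnorm p (maxop f) / lpnorm p f].
End GraphMax.

Definition complete_rel (n : nat) : rel 'I_n := fun u v => u != v.

From HB Require Import structures.
From mathcomp Require Import all_boot all_order all_algebra.
From mathcomp Require Import all_classical all_reals all_analysis.
From mathcomp Require Import ring.
Set Implicit Arguments. Unset Strict Implicit. Unset Printing Implicit Defensive.
Import Order.TTheory GRing.Theory Num.Theory.
Import numFieldTopology.Exports numFieldNormedType.Exports.
Local Open Scope ring_scope.
Local Open Scope classical_set_scope.

(* Fix p > 0, a > 1 and 1 <= k <= n, and test M = M_{K_n} on f := c on k vertices
   and 1 on the others, where c ^ p = a ^ (n / k).  Every ball of radius 1 in K_n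
   is the whole vertex set, so M f >= f on the k peaks and M f is at least the mean
   of f elsewhere; by convexity of t |-> c ^ t that mean is at least
   c ^ (k / n) = a ^ (1 / p).  Hence
   ||M||_p^p >= ||M f||_p^p / ||f||_p^p >= (k a^(n/k) + a (n - k)) / (k a^(n/k) + n - k)
   for every p > 0, which bounds the liminf. *)

Lemma powR_le_chord (R : realType) (c t : R) : 0 < c -> 0 <= t <= 1 ->
  powR c t <= t * c + (1 - t).
Proof.
move=> c0 /andP[t0 t1]; have := convex_expR (Itv01 t0 t1) (ln c) 0.
rewrite !convRE /= mulr0 addr0 expR0 mulr1 lnK ?posrE //.
by rewrite /powR gt_eqF.
Qed.

Lemma limf_einf_ge_near (T : choiceType) (X : filteredType T) (R : realType)
    (f : X -> \bar R) (F : set_system X) (x : \bar R) :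
  (\forall t \near F, (x <= f t)%E) -> (x <= limf_einf f F)%E.
Proof.
move=> xf; rewrite limf_einfE; apply: le_ereal_sup_tmp.
exists (ereal_inf (f @` [set t | x <= f t]%E)); first by exists [set t | x <= f t]%E.
by apply: le_ereal_inf_tmp => _ [t xt <-].
Qed.

Lemma sum_ord_ltn_if (V : ringType) n k (x y : V) : (k <= n)%N ->
  \sum_(u < n) (if (u < k)%N then x else y) = k%:R * x + (n%:R - k%:R) * y.
Proof.
move=> kn; rewrite -(big_mkord xpredT (fun u => if (u < k)%N then x else y)).
rewrite (big_cat_nat (leq0n k) kn) /=.
rewrite (@eq_big_nat _ _ _ 0 k _ (fun=> x)); last by move=> u /andP[_ ->].
rewrite (@eq_big_nat _ _ _ k n _ (fun=> y)); last first.
  by move=> u /andP[ku _]; rewrite ltnNge ku.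
by rewrite !sumr_const_nat subn0 -natrB // !mulr_natl.
Qed.

Section MaximalOperator.
Variables (R : realType) (T : finType) (e : rel T).
Implicit Types (f g : T -> R) (v : T) (p : R).

Lemma gball0 v : gball e v (0 : R) = [set v]%SET.
Proof.
apply/setP => u; rewrite !inE; apply/asboolP/eqP.
  by case=> -[|x s] [_ /= <- //]; rewrite lern0.
by move=> ->; exists [::].
Qed.

Lemma mean_abs_le_sum f (B : {set T}) :
  #|B|%:R^-1 * \sum_(u in B) `|f u| <= \sum_u `|f u|.
Proof.
have sumB : \sum_(u in B) `|f u| <= \sum_u `|f u|.
  by rewrite [leRHS](bigID (mem B)) /= lerDl sumr_ge0.
have [->|B0] := posnP #|B|; first by rewrite invr0 mul0r sumr_ge0.
by apply: le_trans sumB; rewrite ler_piMl ?sumr_ge0 // invf_le1 ?ler1n ?ltr0n.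
Qed.

Lemma maxop_le_sum f v : maxop e f v <= \sum_u `|f u|.
Proof.
apply: ge_sup; last by move=> _ [r _ ->]; exact: mean_abs_le_sum.
by exists (#|gball e v (0 : R)|%:R^-1 * \sum_(u in gball e v (0 : R)) `|f u|); exists 0.
Qed.

Lemma maxop_ge_mean f v (r : R) : 0 <= r ->
  #|gball e v r|%:R^-1 * \sum_(u in gball e v r) `|f u| <= maxop e f v.
Proof.
move=> r0; apply: ub_le_sup; last by exists r.
by exists (\sum_u `|f u|) => _ [s _ ->]; exact: mean_abs_le_sum.
Qed.

Lemma maxop_ge_abs f v : `|f v| <= maxop e f v.
Proof.
by have := @maxop_ge_mean f v 0 (lexx 0); rewrite gball0 big_set1 cards1 invr1 mul1r.
Qed.

Lemma maxop_ge0 f v : 0 <= maxop e f v.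
Proof. exact: le_trans (maxop_ge_abs f v). Qed.

Lemma powR_lpnorm p f : 0 < p -> powR (lpnorm p f) p = \sum_v powR `|f v| p.
Proof.
move=> p0; rewrite /lpnorm -powRrM mulVf ?gt_eqF // powRr1 //.
by rewrite sumr_ge0 // => v _; rewrite powR_ge0.
Qed.

Lemma lpnorm_le p f g : 0 < p -> (forall v, `|f v| <= `|g v|) ->
  lpnorm p f <= lpnorm p g.
Proof.
move=> p0 fg; apply: ge0_ler_powR; rewrite ?invr_ge0 ?(ltW p0) ?nnegrE //.
- by rewrite sumr_ge0 // => v _; rewrite powR_ge0.
- by rewrite sumr_ge0 // => v _; rewrite powR_ge0.
by apply: ler_sum => v _; apply: ge0_ler_powR; rewrite ?(ltW p0).
Qed.

Lemma abs_le_lpnorm p f v : 0 < p -> `|f v| <= lpnorm p f.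
Proof.
move=> p0; rewrite -[leLHS](@powRr1 _ `|f v|) // -(mulfV (lt0r_neq0 p0)) powRrM.
apply: ge0_ler_powR; rewrite ?invr_ge0 ?(ltW p0) ?nnegrE ?powR_ge0 //.
  by rewrite sumr_ge0 // => u _; rewrite powR_ge0.
by rewrite (bigD1 v) //= lerDl sumr_ge0 // => u _; rewrite powR_ge0.
Qed.

Lemma lpnorm_gt0 p f : 0 < p -> f <> (fun=> 0) -> 0 < lpnorm p f.
Proof.
move=> p0 f0; have [v fv0] : exists v, f v != 0.
  apply/not_existsP => fz; apply: f0; apply/funext => v.
  by apply/eqP/negbNE/negP; exact: fz.
by apply: lt_le_trans (abs_le_lpnorm f v p0); rewrite normr_gt0.
Qed.

Lemma lpnorm_cst p (c : R) : 0 < p ->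
  lpnorm p (fun _ : T => c) = powR #|T|%:R p^-1 * `|c|.
Proof.
move=> p0; rewrite /lpnorm sumr_const -[_ *+ _]mulr_natl.
by rewrite powRM ?ler0n ?powR_ge0 // -powRrM mulfV ?(lt0r_neq0 p0) // powRr1.
Qed.

Lemma lpnorm_maxop_le p f : 0 < p ->
  lpnorm p (maxop e f) <= powR #|T|%:R p^-1 * #|T|%:R * lpnorm p f.
Proof.
move=> p0; have L0 : 0 <= lpnorm p f := powR_ge0 _ _.
have -> : powR #|T|%:R p^-1 * #|T|%:R * lpnorm p f =
          lpnorm p (fun _ : T => #|T|%:R * lpnorm p f).
  by rewrite lpnorm_cst // ger0_norm ?mulrA // mulr_ge0.
apply: lpnorm_le => // v; rewrite ger0_norm ?maxop_ge0 // ger0_norm; last exact: mulr_ge0.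
apply: le_trans (maxop_le_sum f v) _.
rewrite -sum1_card natr_sum mulr_suml; apply: ler_sum => u _.
by rewrite mul1r abs_le_lpnorm.
Qed.

Lemma lpnorm_maxop_le_maxop_norm p f : 0 < p -> f <> (fun=> 0) ->
  lpnorm p (maxop e f) <= maxop_norm e p * lpnorm p f.
Proof.
move=> p0 f0; rewrite -ler_pdivrMr ?lpnorm_gt0 //; apply: ub_le_sup; last by exists f.
exists (powR #|T|%:R p^-1 * #|T|%:R) => _ [g g0 ->].
by rewrite ler_pdivrMr ?lpnorm_gt0 // lpnorm_maxop_le.
Qed.

Lemma sum_powR_le_maxop_norm p f g : 0 < p -> f <> (fun=> 0) ->
    (forall v, `|g v| <= maxop e f v) ->
  \sum_v powR `|g v| p <= powR (maxop_norm e p) p * \sum_v powR `|f v| p.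
Proof.
move=> p0 f0 gf; have Mf := lpnorm_maxop_le_maxop_norm p0 f0.
have norm_ge0 : 0 <= maxop_norm e p.
  by rewrite -(pmulr_lge0 _ (lpnorm_gt0 p0 f0)) (le_trans (powR_ge0 _ _) Mf).
rewrite -!powR_lpnorm // -powRM ?powR_ge0 //.
apply: ge0_ler_powR; first exact: ltW.
- by rewrite nnegrE powR_ge0.
- by rewrite nnegrE mulr_ge0 ?powR_ge0.
apply: le_trans Mf; apply: lpnorm_le => // v.
by rewrite (ger0_norm (maxop_ge0 _ _)).
Qed.

End MaximalOperator.

Section CompleteGraph.
Variables (R : realType) (n : nat).

Lemma gball_complete1 (v : 'I_n) :
  gball (@complete_rel n) v (1 : R) = [set: 'I_n]%SET.
Proof.
apply/setP => u; rewrite !inE; apply/asboolP.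
have [->|uv] := eqVneq u v; first by exists [::].
by exists [:: u]; split => //=; rewrite andbT /complete_rel eq_sym.
Qed.

Lemma maxop_complete_ge_mean (f : 'I_n -> R) v :
  n%:R^-1 * \sum_u `|f u| <= maxop (@complete_rel n) f v.
Proof.
have := maxop_ge_mean (@complete_rel n) f v ler01.
by rewrite gball_complete1 cardsT card_ord (eq_bigl xpredT) // => u; rewrite inE.
Qed.

Lemma maxop_complete_step_ge (k : nat) (c : R) (v : 'I_n) : (k <= n)%N -> 0 < c ->
  powR c (k%:R / n%:R) <= maxop (@complete_rel n) (fun u => if (u < k)%N then c else 1) v.
Proof.
move=> kn c0; set f := fun u : 'I_n => _.
have n0 : 0 < n%:R :> R by rewrite ltr0n (leq_ltn_trans _ (ltn_ord v)).
apply: le_trans (maxop_complete_ge_mean f v).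
have -> : \sum_u `|f u| = k%:R * c + (n%:R - k%:R) * 1.
  rewrite -sum_ord_ltn_if //; apply: eq_bigr => u _.
  by rewrite /f; case: ifP => _; rewrite ger0_norm // ltW.
rewrite [leRHS](_ : _ = k%:R / n%:R * c + (1 - k%:R / n%:R)); last first.
  by field; rewrite gt_eqF.
apply: powR_le_chord => //.
by rewrite divr_ge0 //= ler_pdivrMr // mul1r ler_nat.
Qed.

End CompleteGraph.

Lemma powR_maxop_norm_complete_ge (R : realType) (n k : nat) (a p : R) :
    (1 <= k <= n)%N -> 1 < a -> 0 < p ->
  (k%:R * powR a (n%:R / k%:R) + a * (n%:R - k%:R)) /
    (k%:R * powR a (n%:R / k%:R) + (n%:R - k%:R))
  <= powR (maxop_norm (@complete_rel n) p) p.
Proof.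
move=> /andP[k1 kn] a1 p0; set N : R := n%:R; set K : R := k%:R; set r := N / K.
have K0 : 0 < K by rewrite ltr0n.
have N0 : 0 < N by rewrite ltr0n (leq_trans k1 kn).
have NK : 0 <= N - K by rewrite subr_ge0 ler_nat.
have a0 : 0 < a := lt_trans ltr01 a1.
pose c := powR a (r / p).
have c1 : 1 <= c.
  rewrite -(powRr0 a); apply: ler_powR; first exact: ltW.
  by rewrite !divr_ge0 // ltW.
have c0 : 0 < c := lt_le_trans ltr01 c1.
have cp : powR c p = powR a r by rewrite -powRrM divfK ?(lt0r_neq0 p0).
have cK : powR c (K / N) = powR a p^-1.
  by rewrite -powRrM; congr powR; rewrite /r; field; rewrite !gt_eqF.
pose f (u : 'I_n) : R := if (u < k)%N then c else 1.
pose g (u : 'I_n) := if (u < k)%N then c else powR a p^-1.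
have f0 : f <> (fun=> 0).
  move=> /(congr1 (fun h => h (Ordinal (leq_trans k1 kn)))); rewrite /f /= k1.
  by move=> c_eq0; move: c0; rewrite c_eq0 ltxx.
have gf v : `|g v| <= maxop (@complete_rel n) f v.
  rewrite /g; case: ifP => vk.
    by have := maxop_ge_abs (@complete_rel n) f v; rewrite /f vk ger0_norm // ltW.
  by rewrite ger0_norm ?powR_ge0 // -cK maxop_complete_step_ge.
have sum_powR_if (x y : R) : 0 <= x -> 0 <= y ->
    \sum_(u < n) powR `|if (u < k)%N then x else y| p =
    K * powR x p + (N - K) * powR y p.
  move=> x0 y0; rewrite -sum_ord_ltn_if //; apply: eq_bigr => u _.
  by case: ifP => _; rewrite ger0_norm.
have := sum_powR_le_maxop_norm p0 f0 gf.
rewrite !sum_powR_if ?powR_ge0 ?(ltW c0) // cp -powRrM mulVf ?(lt0r_neq0 p0) //.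
rewrite powRr1 ?(ltW a0) // powR1 mulr1 => le_sums.
have D0 : 0 < K * powR a r + (N - K) by rewrite ltr_wpDr // mulr_gt0 ?powR_gt0.
by rewrite ler_pdivrMr // [a * _]mulrC.
Qed.

Theorem lemma3p2 (R : realType) (n : nat) :
  (ereal_sup [set ((k%:R * powR a (n%:R / k%:R) + a * (n%:R - k%:R)) /
                   (k%:R * powR a (n%:R / k%:R) + (n%:R - k%:R)))%R%:E
              | a in [set a : R | (1 < a)%R] & k in [set k : nat | (1 <= k <= n)%N]]
   <= limf_einf (fun p : R => (powR (maxop_norm (@complete_rel n) p) p)%R%:E)
                (pinfty_nbhs R))%E.
Proof.
apply: ge_ereal_sup => _ [a /= a1 [k /= kn <-]]; apply: limf_einf_ge_near.
near=> p; rewrite lee_fin powR_maxop_norm_complete_ge //.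
Unshelve. all: by end_near. Qed.
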